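(* Let $\kappa\neq0$ and let $S$ be a $\kappa$-cylindrical surface with directrix $\alpha=(x,z)$, where $(x,z,\theta)$ solves $x'=\cos\theta$, $z'=\sin\theta$, $\theta'=\kappa z$ on $\mathbb R$. Assume that $\alpha$ crosses the $x$-axis at $s=s_0$, i.e. $z(s_0)=0$. Then the curve $\alpha$ is symmetric with respect to the point $\alpha(s_0)$.
   Context: A $\kappa$-cylindrical surface ($\kappa\ne0$ constant) is a cylindrical ruled surface in $\mathbb R^3$ locally satisfying $\operatorname{div}\big(Du/\sqrt{1+|Du|^2}\big)=\kappa u$ (mean curvature equal to $\kappa z/2$). It has horizontal rulings and is of the form $(x(s),t,z(s))$, with arc-length directrix $\alpha=(x,z)$ and $\theta$ the angle between $\partial/\partial x$ and $\alpha'$, satisfying the system above. *)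

From Stdlib Require Import Reals.
From Coquelicot Require Import Coquelicot.
Open Scope R_scope.

Definition kappa_cyl_system (kappa : R) (x z theta : R -> R) : Prop :=
  forall s : R,
    is_derive x s (cos (theta s)) /\
    is_derive z s (sin (theta s)) /\
    is_derive theta s (kappa * z s).

Definition point_symmetric_about (x z : R -> R) (s0 : R) : Prop :=
  forall s : R,
    x (s0 + s) + x (s0 - s) = 2 * x s0 /\
    z (s0 + s) + z (s0 - s) = 2 * z s0.

From Stdlib Require Import Reals Lra.
From Coquelicot Require Import Coquelicot.
Open Scope R_scope.

(* The point reflection of a solution through alpha(s0),
   s |-> (2 x(s0) - x(2 s0 - s), - z(2 s0 - s), theta(2 s0 - s)),
   is again a solution, and when z(s0) = 0 it has the same initial data at s0.
   Solutions are determined by their initial data: for two solutions the energy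
   E = (z1 - z2)^2 + (theta1 - theta2)^2 satisfies |E'| <= (1 + |kappa|) E because
   sin is 1-Lipschitz, so E vanishes identically by Gronwall's argument, after which
   x1 - x2 has zero derivative. *)

Lemma is_derive_reflect (f : R -> R) (c s l : R) :
  is_derive f (c - s) l -> is_derive (fun t => f (c - t)) s (- l).
Proof.
  intros Hf.
  replace (- l) with (scal (-1) l) by (unfold scal; simpl; unfold mult; simpl; ring).
  apply (is_derive_comp f (fun t => c - t)); [exact Hf |].
  auto_derive; auto; ring.
Qed.

Lemma is_derive_sum_sq (f g : R -> R) (s df dg : R) :
  is_derive f s df -> is_derive g s dg ->
  is_derive (fun t => f t ^ 2 + g t ^ 2) s (2 * f s * df + 2 * g s * dg).
Proof.
  intros Hf Hg.
  apply (is_derive_plus (fun t => f t ^ 2) (fun t => g t ^ 2)).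
  - replace (2 * f s * df) with (INR 2 * df * f s ^ 1) by (simpl; ring).
    now apply (is_derive_pow f 2).
  - replace (2 * g s * dg) with (INR 2 * dg * g s ^ 1) by (simpl; ring).
    now apply (is_derive_pow g 2).
Qed.

Lemma is_derive_ge0_le (F dF : R -> R) (a b : R) :
  (forall t, is_derive F t (dF t)) -> (forall t, 0 <= dF t) -> a <= b -> F a <= F b.
Proof.
  intros HF Hpos Hab.
  destruct (MVT_cor4 F dF a (Rabs (b - a)) (fun c _ => HF c) b (Rle_refl _))
    as [c [Hc _]].
  pose proof (Hpos c); nra.
Qed.

Lemma Rabs_sin_sub_le (a b : R) : Rabs (sin a - sin b) <= Rabs (a - b).
Proof.
  rewrite <- (Rmult_1_l (Rabs (a - b))).
  apply (bounded_variation sin cos); intros t _.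
  split; [apply is_derive_sin | apply Rabs_le, COS_bound].
Qed.

Lemma gronwall_vanish (E dE : R -> R) (L s0 : R) :
  (forall s, is_derive E s (dE s)) -> (forall s, 0 <= E s) ->
  (forall s, Rabs (dE s) <= L * E s) -> E s0 = 0 -> forall s, E s = 0.
Proof.
  intros HE Hpos Hbound H0 s.
  (* E(t) exp(-L (t - s0)) is nonincreasing and E(t) exp(L (t - s0)) nondecreasing. *)
  assert (Hweighted : forall c t, is_derive (fun t => E t * exp (c * (t - s0))) t
                                    (exp (c * (t - s0)) * (dE t + c * E t))).
  { intros c t.
    replace (exp (c * (t - s0)) * (dE t + c * E t))
      with (dE t * exp (c * (t - s0)) + E t * (c * exp (c * (t - s0)))) by ring.
    apply (is_derive_mult E (fun t => exp (c * (t - s0))));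
      [apply HE | | intros; apply Rmult_comm].
    auto_derive; auto; unfold Rminus; ring. }
  assert (Hweight_le0 : forall c, E s * exp (c * (s - s0)) <= 0 -> E s = 0).
  { intros c Hle. pose proof (exp_pos (c * (s - s0))). pose proof (Hpos s). nra. }
  assert (HdE : forall t, - (L * E t) <= dE t <= L * E t)
    by (intros t; apply Rabs_le_between, Hbound).
  destruct (Rle_or_lt s0 s) as [Hs | Hs].
  - apply (Hweight_le0 (- L)).
    enough (Hmono : - (E s0 * exp (- L * (s0 - s0))) <= - (E s * exp (- L * (s - s0))))
      by (rewrite H0 in Hmono; lra).
    apply (is_derive_ge0_le (fun t => - (E t * exp (- L * (t - s0))))
             (fun t => - (exp (- L * (t - s0)) * (dE t + - L * E t)))); [| | exact Hs].
    + intros t. apply (is_derive_opp (fun t => E t * exp (- L * (t - s0)))), Hweighted.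
    + intros t. pose proof (exp_pos (- L * (t - s0))). pose proof (HdE t). nra.
  - apply (Hweight_le0 L).
    enough (Hmono : E s * exp (L * (s - s0)) <= E s0 * exp (L * (s0 - s0)))
      by (rewrite H0 in Hmono; lra).
    apply (is_derive_ge0_le _ _ s s0 (Hweighted L)); [| lra].
    intros t. pose proof (exp_pos (L * (t - s0))). pose proof (HdE t). nra.
Qed.
Lemma kappa_cyl_system_point_reflection (kappa : R) (x z theta : R -> R) (s0 : R) :
  kappa_cyl_system kappa x z theta ->
  kappa_cyl_system kappa (fun s => 2 * x s0 - x (2 * s0 - s))
    (fun s => - z (2 * s0 - s)) (fun s => theta (2 * s0 - s)).
Proof.
  intros Hsys s.
  destruct (Hsys (2 * s0 - s)) as [Hx [Hz Htheta]].
  split; [| split].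
  - replace (cos (theta (2 * s0 - s))) with (0 - - cos (theta (2 * s0 - s))) by ring.
    apply (is_derive_minus (fun _ => 2 * x s0)); [now auto_derive |].
    now apply is_derive_reflect.
  - replace (sin (theta (2 * s0 - s))) with (- - sin (theta (2 * s0 - s))) by ring.
    apply (is_derive_opp (fun t => z (2 * s0 - t))).
    now apply is_derive_reflect.
  - replace (kappa * - z (2 * s0 - s)) with (- (kappa * z (2 * s0 - s))) by ring.
    now apply is_derive_reflect.
Qed.

Lemma kappa_cyl_system_unique_z_theta (kappa : R) (x1 z1 theta1 x2 z2 theta2 : R -> R)
    (s0 : R) :
  kappa_cyl_system kappa x1 z1 theta1 -> kappa_cyl_system kappa x2 z2 theta2 ->
  z1 s0 = z2 s0 -> theta1 s0 = theta2 s0 ->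
  forall s, z1 s = z2 s /\ theta1 s = theta2 s.
Proof.
  intros Hsys1 Hsys2 Hz0 Htheta0.
  set (u := fun s => z1 s - z2 s).
  set (v := fun s => theta1 s - theta2 s).
  set (dE := fun s => 2 * u s * (sin (theta1 s) - sin (theta2 s)) + 2 * v s * (kappa * u s)).
  assert (HE : forall s, is_derive (fun t => u t ^ 2 + v t ^ 2) s (dE s)).
  { intros s.
    destruct (Hsys1 s) as [_ [Hz1 Htheta1]], (Hsys2 s) as [_ [Hz2 Htheta2]].
    apply is_derive_sum_sq.
    - now apply (is_derive_minus z1 z2).
    - replace (kappa * u s) with (kappa * z1 s - kappa * z2 s) by (unfold u; ring).
      now apply (is_derive_minus theta1 theta2). }
  assert (Hbound : forall s, Rabs (dE s) <= (1 + Rabs kappa) * (u s ^ 2 + v s ^ 2)).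
  { intros s. unfold dE.
    pose proof (Rabs_sin_sub_le (theta1 s) (theta2 s)) as Hsin.
    fold (v s) in Hsin.
    assert (Hamgm : 2 * Rabs (u s) * Rabs (v s) <= u s ^ 2 + v s ^ 2).
    { rewrite <- (pow2_abs (u s)), <- (pow2_abs (v s)).
      pose proof (pow2_ge_0 (Rabs (u s) - Rabs (v s))). nra. }
    pose proof (Rabs_triang (2 * u s * (sin (theta1 s) - sin (theta2 s)))
                  (2 * v s * (kappa * u s))) as Htriangle.
    rewrite !Rabs_mult, (Rabs_right 2) in Htriangle by lra.
    pose proof (Rabs_pos (u s)). pose proof (Rabs_pos kappa). nra. }
  intros s.
  assert (Hvanish : u s ^ 2 + v s ^ 2 = 0).
  { apply (gronwall_vanish _ dE (1 + Rabs kappa) s0 HE); [| exact Hbound |].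
    - intros t. nra.
    - unfold u, v. rewrite Hz0, Htheta0. ring. }
  rewrite <- !Rsqr_pow2 in Hvanish.
  destruct (Rplus_sqr_eq_0 _ _ Hvanish) as [Hu Hv].
  unfold u, v in Hu, Hv. split; lra.
Qed.

Lemma kappa_cyl_system_unique (kappa : R) (x1 z1 theta1 x2 z2 theta2 : R -> R) (s0 : R) :
  kappa_cyl_system kappa x1 z1 theta1 -> kappa_cyl_system kappa x2 z2 theta2 ->
  x1 s0 = x2 s0 -> z1 s0 = z2 s0 -> theta1 s0 = theta2 s0 ->
  forall s, x1 s = x2 s /\ z1 s = z2 s /\ theta1 s = theta2 s.
Proof.
  intros Hsys1 Hsys2 Hx0 Hz0 Htheta0.
  pose proof (kappa_cyl_system_unique_z_theta _ _ _ _ _ _ _ _ Hsys1 Hsys2 Hz0 Htheta0)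
    as Hztheta.
  assert (Hdx : forall t, is_derive (fun t => x1 t - x2 t) t 0).
  { intros t.
    destruct (Hsys1 t) as [Hx1 _], (Hsys2 t) as [Hx2 _], (Hztheta t) as [_ Htheta].
    replace 0 with (cos (theta1 t) - cos (theta2 t)) by (rewrite Htheta; ring).
    now apply (is_derive_minus x1 x2). }
  intros s. split; [| apply Hztheta].
  enough (x1 s - x2 s = x1 s0 - x2 s0) by lra.
  destruct (Rtotal_order s s0) as [Hs | [-> | Hs]]; [| reflexivity |].
  - apply (eq_is_derive (fun t => x1 t - x2 t)); [intros t _; apply Hdx | exact Hs].
  - symmetry. apply (eq_is_derive (fun t => x1 t - x2 t)); [intros t _; apply Hdx | exact Hs].
Qed.

Theorem mainTheorem3 (kappa : R) (x z theta : R -> R) (s0 : R) :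
  kappa <> 0 ->
  kappa_cyl_system kappa x z theta ->
  z s0 = 0 ->
  point_symmetric_about x z s0.
Proof.
  intros _ Hsys Hz0 s.
  assert (Hreflected := kappa_cyl_system_point_reflection kappa x z theta s0 Hsys).
  assert (Hsame : forall t, x t = 2 * x s0 - x (2 * s0 - t) /\ z t = - z (2 * s0 - t)
                            /\ theta t = theta (2 * s0 - t)).
  { apply (kappa_cyl_system_unique kappa _ _ _ _ _ _ s0 Hsys Hreflected);
      replace (2 * s0 - s0) with s0 by ring; lra. }
  destruct (Hsame (s0 + s)) as [Hx [Hz _]].
  replace (2 * s0 - (s0 + s)) with (s0 - s) in Hx, Hz by ring.
  split; lra.
Qed.
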